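(* Let $(\mathcal V,\mathcal W,\lambda)$ be a FTvN system. If $E\subseteq \mathcal V$ is convex and spectral, then $\lambda(E)$ is convex in $\mathcal W$. In particular, if $E$ is a spectral set that is also a convex cone, then $\lambda(E)$ is a convex cone.
   Context: A Fan-Theobald-von Neumann (FTvN) system is a triple $(\mathcal V,\mathcal W,\lambda)$ where $\mathcal V,\mathcal W$ are real inner product spaces and $\lambda:\mathcal V\to\mathcal W$ is a map such that: (A1) $\|\lambda(x)\|=\|x\|$ for all $x\in\mathcal V$; (A2) $\langle x,y\rangle\le\langle\lambda(x),\lambda(y)\rangle$ for all $x,y\in\mathcal V$; (A3) for every $c\in\mathcal V$ and $q\in\lambda(\mathcal V)$ there exists $x\in\mathcal V$ with $\lambda(x)=q$ and $\langle c,x\rangle=\langle\lambda(c),\lambda(x)\rangle$. The $\lambda$-orbit of $u\in\mathcal V$ is $[u]=\{x\in\mathcal V:\lambda(x)=\lambda(u)\}$. A set $E\subseteq\mathcal V$ is spectral if $E=\lambda^{-1}(Q)$ for some $Q\subseteq\mathcal W$, equivalently if $x\in E$ implies $[x]\subseteq E$. A cone is a nonempty set closed under multiplication by nonnegative scalars. *)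

From HB Require Import structures.
From mathcomp Require Import all_boot all_order all_algebra.
From mathcomp Require Import boolp classical_sets reals.
Set Implicit Arguments. Unset Strict Implicit. Unset Printing Implicit Defensive.
Import Order.TTheory GRing.Theory Num.Theory.
Local Open Scope ring_scope.
Local Open Scope classical_set_scope.

Definition is_inner_product (R : realType) (V : lmodType R) (ip : V -> V -> R) : Prop :=
  [/\ (forall x y, ip x y = ip y x),
      (forall (a : R) (x y z : V), ip (a *: x + y) z = a * ip x z + ip y z)
    & (forall x, x != 0 -> 0 < ip x x)].

Definition ipnorm (R : realType) (V : lmodType R) (ip : V -> V -> R) (x : V) : R :=
  Num.sqrt (ip x x).

Definition FTvN_system (R : realType) (V W : lmodType R)
  (ipV : V -> V -> R) (ipW : W -> W -> R) (lam : V -> W) : Prop :=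
  [/\ is_inner_product ipV, is_inner_product ipW,
      (forall x, ipnorm ipW (lam x) = ipnorm ipV x),
      (forall x y, ipV x y <= ipW (lam x) (lam y))
    & (forall c q, range lam q ->
         exists x, lam x = q /\ ipV c x = ipW (lam c) (lam x))].

Definition convex_set (R : realType) (V : lmodType R) (E : set V) : Prop :=
  forall x y (t : R), E x -> E y -> 0 <= t -> t <= 1 -> E (t *: x + (1 - t) *: y).

Definition is_cone (R : realType) (V : lmodType R) (E : set V) : Prop :=
  E !=set0 /\ forall x (a : R), E x -> 0 <= a -> E (a *: x).

Definition spectral_set (R : realType) (V W : lmodType R) (lam : V -> W) (E : set V) : Prop :=
  exists Q : set W, E = lam @^-1` Q.

(* If [u] and [x] commute, i.e. <u, x> = <lam u, lam x>, then for [s, r >= 0]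
   the vectors [z := s u + r x] and [w := s lam u + r lam x] satisfy
   |w| = |z| = |lam z| and, by (A2), |z|^2 <= <lam z, w>; hence [lam z = w].
   Given [u, v] in a spectral set [E], (A3) yields [x] in the orbit of [v]
   (so [x] is in [E]) commuting with [u], and the segment from [lam u] to
   [lam v] is the image of the segment from [u] to [x], which lies in [E]. *)
From HB Require Import structures.
From mathcomp Require Import all_boot all_order all_algebra.
From mathcomp Require Import boolp classical_sets reals.
From mathcomp Require Import ring lra.
Set Implicit Arguments. Unset Strict Implicit. Unset Printing Implicit Defensive.
Import Order.TTheory GRing.Theory Num.Theory.
Local Open Scope ring_scope.
Local Open Scope classical_set_scope.

Section InnerProduct.
Variables (R : realType) (V : lmodType R) (ip : V -> V -> R).
Hypothesis ip_inner : is_inner_product ip.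

Lemma ipC x y : ip x y = ip y x.
Proof. by case: ip_inner. Qed.

Lemma ip0l z : ip 0 z = 0.
Proof.
case: ip_inner => _ ipDZl _.
by have := ipDZl 1 0 0 z; rewrite scaler0 addr0 mul1r; lra.
Qed.

Lemma ip_combl a b x y z : ip (a *: x + b *: y) z = a * ip x z + b * ip y z.
Proof.
case: ip_inner => _ ipDZl _.
by rewrite ipDZl -[b *: y]addr0 ipDZl ip0l addr0.
Qed.

Lemma ip_combr a b x y z : ip z (a *: x + b *: y) = a * ip z x + b * ip z y.
Proof. by rewrite ipC ip_combl !(ipC _ z). Qed.

Lemma ip_comb_self a b x y :
  ip (a *: x + b *: y) (a *: x + b *: y) =
  a ^+ 2 * ip x x + 2 * a * b * ip x y + b ^+ 2 * ip y y.
Proof. by rewrite ip_combl !ip_combr (ipC y x); ring. Qed.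

Lemma ip_self_ge0 x : 0 <= ip x x.
Proof.
case: ip_inner => _ _ ip_gt0; have [->|/ip_gt0/ltW//] := eqVneq x 0.
by rewrite ip0l.
Qed.

Lemma ip_self_le0_eq0 x : ip x x <= 0 -> x = 0.
Proof.
case: ip_inner => _ _ ip_gt0 le0; apply/eqP/negPn/negP => /ip_gt0; lra.
Qed.

Lemma ip_self_eq_ip x y : ip x x = ip y y -> ip x x <= ip x y -> x = y.
Proof.
move=> xx_yy xx_le_xy; apply/eqP; rewrite -subr_eq0; apply/eqP.
apply: ip_self_le0_eq0.
have -> : x - y = 1 *: x + (-1) *: y by rewrite scale1r scaleN1r.
by rewrite ip_comb_self -xx_yy; lra.
Qed.

End InnerProduct.

Section FTvN.
Variables (R : realType) (V W : lmodType R).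
Variables (ipV : V -> V -> R) (ipW : W -> W -> R) (lam : V -> W).
Hypothesis ftvn : FTvN_system ipV ipW lam.

Lemma ip_self_lam x : ipW (lam x) (lam x) = ipV x x.
Proof.
case: ftvn => ipV_inner ipW_inner norm_lam _ _.
rewrite -(sqr_sqrtr (ip_self_ge0 ipW_inner _)) -(sqr_sqrtr (ip_self_ge0 ipV_inner _)).
exact: (congr1 (fun t => t ^+ 2) (norm_lam x)).
Qed.

Lemma lam_conic_comb u x (s r : R) : 0 <= s -> 0 <= r ->
  ipV u x = ipW (lam u) (lam x) ->
  lam (s *: u + r *: x) = s *: lam u + r *: lam x.
Proof.
case: ftvn => ipV_inner ipW_inner _ ip_le_lam _ s0 r0 commute_ux.
set z := s *: u + r *: x; set w := s *: lam u + r *: lam x.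
have norm_w : ipW (lam z) (lam z) = ipW w w.
  by rewrite ip_self_lam !ip_comb_self // !ip_self_lam commute_ux.
apply: (ip_self_eq_ip ipW_inner norm_w).
rewrite ip_self_lam {1}/z ip_comb_self // ip_combr //.
have := ip_le_lam z u; have := ip_le_lam z x.
rewrite /z !ip_combl // (ipC ipV_inner x u) commute_ux; nra.
Qed.

Lemma lam_scale x (a : R) : 0 <= a -> lam (a *: x) = a *: lam x.
Proof.
move=> a0; have := @lam_conic_comb x x a 0 a0 (lexx _).
by rewrite !scale0r !addr0; apply; rewrite ip_self_lam.
Qed.

Lemma spectral_orbit E u v :
  spectral_set lam E -> E u -> lam v = lam u -> E v.
Proof. by case=> Q -> Qu lam_vu; rewrite /preimage /= lam_vu. Qed.

Lemma convex_spectral_image E :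
  convex_set E -> spectral_set lam E -> convex_set (lam @` E).
Proof.
move=> convE specE _ _ t [u Eu <-] [v Ev <-] t0 t1.
case: ftvn => _ _ _ _ simultaneous.
have [x [lam_xv commute_ux]] := simultaneous u (lam v) (ex_intro2 _ _ v I erefl).
have Ex : E x := spectral_orbit specE Ev lam_xv.
exists (t *: u + (1 - t) *: x); first exact: convE.
by rewrite lam_conic_comb // ?lam_xv //; lra.
Qed.

Lemma cone_image E : is_cone E -> is_cone (lam @` E).
Proof.
case=> [[y Ey] coneE]; split; first by exists (lam y), y.
move=> _ a [x Ex <-] a0; exists (a *: x); first exact: coneE.
exact: lam_scale.
Qed.

End FTvN.

Theorem proposition5p2 (R : realType) (V W : lmodType R)
  (ipV : V -> V -> R) (ipW : W -> W -> R) (lam : V -> W) :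
  FTvN_system ipV ipW lam ->
  (forall E : set V, convex_set E -> spectral_set lam E -> convex_set (lam @` E)) /\
  (forall E : set V, spectral_set lam E -> convex_set E -> is_cone E ->
     convex_set (lam @` E) /\ is_cone (lam @` E)).
Proof.
move=> ftvn; split=> [E convE specE | E specE convE coneE].
  exact: (convex_spectral_image ftvn convE specE).
split; first exact: (convex_spectral_image ftvn convE specE).
exact: (cone_image ftvn coneE).
Qed.
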